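(* Let $\Lambda$ be a smooth section of $\wedge^3(D^* )$, viewed as a 3-form on $Q$ that vanishes upon contraction with vectors in $W$, and let $\Xi$ be the 2-form on $D^*$ obtained by contracting $\tau_{D^*}^*\Lambda$ with any second order vector field on $D^*$; locally $\Xi=\tfrac12 B^\gamma_{\alpha\beta}\pi_\gamma\,\mu^\alpha\wedge\mu^\beta$ where $B_{\alpha\beta\gamma}=\Lambda(X_\alpha,X_\beta,X_\gamma)$ and $B^\gamma_{\alpha\beta}=\mathcal G^{\gamma\delta}B_{\alpha\beta\delta}$ (here $\mu^\alpha$ denotes the pull-back $\tau_{D^*}^*\mu^\alpha$). Then the bundle map $$\mathrm{Id}_{TD^*}+\Pi_{nh}^\sharp\circ\Xi^\flat : TD^*\to TD^*$$ is an invertible endomorphism of $TD^*$.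
   Context: $Q$ is a smooth $n$-manifold with a Riemannian metric $\langle\cdot,\cdot\rangle$ and a smooth function $V$; $D\subset TQ$ is a distribution of constant rank $r<n$. A subbundle $W\subset TQ$ with $TQ=D\oplus W$ is fixed, and $D^*$ is identified with the annihilator $W^\circ\subset T^*Q$; $\tau_{D^*}:D^*\to Q$ is the projection. Indices: $\alpha,\beta,\gamma,\delta\in\{1,\dots,r\}$, $A\in\{r+1,\dots,n\}$, $i,j,k\in\{1,\dots,n\}$, with summation convention. Locally, $X_1,\dots,X_r$ is a basis of sections of $D$ and $X_{r+1},\dots,X_n$ a basis of sections of the metric orthogonal complement $D^\perp$; write $X_j=\rho^i_j\partial_{q^i}$ in coordinates $q^i$ on $Q$ and $[X_i,X_j]=C^k_{ij}X_k$. Put $\mathcal G_{\alpha\beta}=\langle X_\alpha,X_\beta\rangle$ with inverse matrix $\mathcal G^{\alpha\beta}$. Let $\mu^1,\dots,\mu^r$ be the local 1-forms on $Q$ vanishing on $W$ with $\mu^\alpha(X_\beta)=\delta^\alpha_\beta$; the element $\pi_\alpha\mu^\alpha(q)$ of $D^*$ has coordinates $(q^i,\pi_\alpha)$. The nonholonomic bivector on $D^*$ is $\Pi_{nh}=\rho^i_\alpha\partial_{q^i}\wedge\partial_{\pi_\alpha}-\tfrac12C^\gamma_{\alpha\beta}\pi_\gamma\,\partial_{\pi_\alpha}\wedge\partial_{\pi_\beta}$, i.e. $\{q^i,q^j\}=0$, $\{q^i,\pi_\alpha\}=\rho^i_\alpha$, $\{\pi_\alpha,\pi_\beta\}=-C^\gamma_{\alpha\beta}\pi_\gamma$.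 For a bivector $\Pi$, $\Pi^\sharp:T^*D^*\to TD^*$ is defined by $\eta(\Pi^\sharp(\xi))=\Pi(\eta,\xi)$; for a 2-form $\Xi$, $\Xi^\flat(v)=\Xi(v,\cdot)$. A vector field $Z$ on $D^*$ is second order if $T\tau_{D^*}(Z(q,\pi))=\mathcal G^{\alpha\beta}\pi_\beta X_\alpha(q)$ for all $(q,\pi)$. *)

(* Pointwise (fibrewise) coordinate model of Lemma 3.1.
   Dimensions: n = r + m with 0 < m (i.e. r < n).
   Tangent vectors to D^* at a point (q,pi) are column vectors of size n + r:
   the first n entries are the d/dq^i components, the last r the d/dpi_alpha ones.
   Covectors are row vectors of size n + r (dq^i components, then dpi_alpha). *)
From HB Require Import structures.
From mathcomp Require Import all_boot all_order all_algebra.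
Set Implicit Arguments. Unset Strict Implicit. Unset Printing Implicit Defensive.
Import Order.TTheory GRing.Theory Num.Theory.
Local Open Scope ring_scope.

Section Defs.
Variables (R : realFieldType) (r m : nat).
Local Notation n := (r + m)%N.
Local Notation N := (n + r)%N.

Definition qpart (v : 'cV[R]_N) : 'cV[R]_n := usubmx v.

(* a 3-tensor on T_qQ given by its coefficients in the dq basis *)
Definition lam_eval (L : 'I_n -> 'I_n -> 'I_n -> R) (a b c : 'cV[R]_n) : R :=
  \sum_(i < n) \sum_(j < n) \sum_(k < n) L i j k * a i 0 * b j 0 * c k 0.

Definition alternating3 (L : 'I_n -> 'I_n -> 'I_n -> R) : Prop :=
  forall i j k, L i j k = - L j i k /\ L i j k = - L i k j.

(* the frame X_1..X_n (columns of X); X_alpha = column lshift m alpha *)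
Definition XD (X : 'M[R]_n) (a : 'I_r) : 'cV[R]_n := col (lshift m a) X.

Definition Gram (g X : 'M[R]_n) : 'M[R]_r :=
  \matrix_(a < r, b < r) ((XD X a)^T *m g *m XD X b) 0 0.

Definition second_order (g X : 'M[R]_n) (pi : 'cV[R]_r) (Z : 'cV[R]_N) : Prop :=
  qpart Z = \sum_(a < r) \sum_(b < r) ((invmx (Gram g X)) a b * pi b 0) *: XD X a.

(* Xi = i_Z (tau^* Lambda) *)
Definition Xi (L : 'I_n -> 'I_n -> 'I_n -> R) (Z v w : 'cV[R]_N) : R :=
  lam_eval L (qpart Z) (qpart v) (qpart w).

(* the nonholonomic bivector
   Pi = rho^i_a d_{q^i} /\ d_{pi_a} - 1/2 C^c_{ab} pi_c d_{pi_a} /\ d_{pi_b},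
   with (u /\ v)(eta, xi) = eta(u) xi(v) - eta(v) xi(u), rho^i_a = X i a,
   C k i j = C^k_{ij}. *)
Definition Pinh (X : 'M[R]_n) (C : 'I_n -> 'I_n -> 'I_n -> R) (pi : 'cV[R]_r)
  (eta xi : 'rV[R]_N) : R :=
  \sum_(i < n) \sum_(a < r)
     X i (lshift m a) * (eta 0 (lshift r i) * xi 0 (rshift n a)
                         - eta 0 (rshift n a) * xi 0 (lshift r i))
  - 2^-1 * \sum_(a < r) \sum_(b < r) \sum_(c < r)
     C (lshift m c) (lshift m a) (lshift m b) * pi c 0 *
       (eta 0 (rshift n a) * xi 0 (rshift n b) - eta 0 (rshift n b) * xi 0 (rshift n a)).

(* Pi^sharp: eta(Pi^sharp xi) = Pi(eta, xi) *)
Definition Pi_sharp (P : 'rV[R]_N -> 'rV[R]_N -> R) (xi : 'rV[R]_N) : 'cV[R]_N :=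
  \col_(k < N) P (delta_mx 0 k) xi.

Definition Xi_flat (B : 'cV[R]_N -> 'cV[R]_N -> R) (v : 'cV[R]_N) : 'rV[R]_N :=
  \row_(l < N) B v (delta_mx l 0).

Definition IdPiXi (P : 'rV[R]_N -> 'rV[R]_N -> R) (B : 'cV[R]_N -> 'cV[R]_N -> R)
  (v : 'cV[R]_N) : 'cV[R]_N := v + Pi_sharp P (Xi_flat B v).

End Defs.

(* Xi is semi-basic: it only sees the horizontal parts of its arguments, so
   w := Pi_nh^sharp o Xi^flat factors through the horizontal projection.  On a
   semi-basic covector Pi_nh^sharp has only d/dpi components, so w takes values
   in the vertical bundle, where it vanishes: w o w = 0 and Id - w inverts Id + w. *)
From HB Require Import structures.
From mathcomp Require Import all_boot all_order all_algebra.
Import Order.TTheory GRing.Theory Num.Theory.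
Local Open Scope ring_scope.

Lemma bijective_addr_square_zero {U V : zmodType} (p : {additive V -> U})
    (w : V -> V) :
  (forall v v', p v = p v' -> w v = w v') -> (forall v, p (w v) = 0) ->
  bijective (fun v => v + w v).
Proof.
move=> w_p pw0; exists (fun v => v - w v) => v.
- by rewrite (w_p _ v) ?addrK // raddfD pw0 addr0.
- by rewrite (w_p _ v) ?subrK // raddfB pw0 subr0.
Qed.

Section SemiBasic.
Variables (R : realFieldType) (r m : nat).
Local Notation n := (r + m)%N.
Local Notation N := (n + r)%N.

Lemma Xi_flat_qpart (L : 'I_n -> 'I_n -> 'I_n -> R) (Z v v' : 'cV[R]_N) :
  qpart v = qpart v' -> Xi_flat (Xi L Z) v = Xi_flat (Xi L Z) v'.
Proof. by rewrite /Xi_flat /Xi => ->. Qed.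

Lemma Xi_flat_vertical (L : 'I_n -> 'I_n -> 'I_n -> R) (Z v : 'cV[R]_N)
    (a : 'I_r) :
  Xi_flat (Xi L Z) v 0 (rshift n a) = 0.
Proof.
rewrite mxE /Xi /lam_eval.
apply: big1 => i _; apply: big1 => j _; apply: big1 => k _.
by rewrite /qpart !mxE eq_lrshift mulr0.
Qed.

Lemma qpart_Pi_sharp_semibasic (X : 'M[R]_n) (C : 'I_n -> 'I_n -> 'I_n -> R)
    (pi : 'cV[R]_r) (xi : 'rV[R]_N) :
  (forall a, xi 0 (rshift n a) = 0) -> qpart (Pi_sharp (Pinh X C pi) xi) = 0.
Proof.
move=> xi_semibasic; apply/matrixP => i j; rewrite /qpart !mxE /Pinh.
have horizontal_terms_vanish :
    \sum_(k < n) \sum_(a < r) X k (lshift m a) *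
      ((delta_mx 0 (lshift r i) : 'rV[R]_N) 0 (lshift r k) * xi 0 (rshift n a)
       - (delta_mx 0 (lshift r i) : 'rV[R]_N) 0 (rshift n a) * xi 0 (lshift r k))
    = 0.
  apply: big1 => k _; apply: big1 => a _.
  by rewrite xi_semibasic !mxE eq_rlshift andbF !(mulr0, mul0r, subrr).
have vertical_terms_vanish :
    \sum_(a < r) \sum_(b < r) \sum_(c < r)
      C (lshift m c) (lshift m a) (lshift m b) * pi c 0 *
      ((delta_mx 0 (lshift r i) : 'rV[R]_N) 0 (rshift n a) * xi 0 (rshift n b)
       - (delta_mx 0 (lshift r i) : 'rV[R]_N) 0 (rshift n b) * xi 0 (rshift n a))
    = 0.
  apply: big1 => a _; apply: big1 => b _; apply: big1 => c _.
  by rewrite !xi_semibasic !(mulr0, subrr).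
by rewrite horizontal_terms_vanish vertical_terms_vanish mulr0 subrr.
Qed.

End SemiBasic.

Theorem lemma3p1 (R : realFieldType) (r m : nat) (hm : (0 < m)%N)
  (g : 'M[R]_(r + m)) (X : 'M[R]_(r + m)) (Wb : 'M[R]_(r + m, m))
  (C : 'I_(r + m) -> 'I_(r + m) -> 'I_(r + m) -> R)
  (L : 'I_(r + m) -> 'I_(r + m) -> 'I_(r + m) -> R)
  (pi : 'cV[R]_r) (Z : 'cV[R]_((r + m) + r)) :
  g^T = g ->
  (forall u : 'cV[R]_(r + m), u != 0 -> 0 < (u^T *m g *m u) 0 0) ->
  X \in unitmx ->
  (forall (a : 'I_r) (A : 'I_m),
      (col (lshift m a) X)^T *m g *m col (rshift r A) X = 0) ->
  row_mx (lsubmx X) Wb \in unitmx ->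
  (forall k i j, C k i j = - C k j i) ->
  alternating3 L ->
  (forall (A : 'I_m) (b c : 'cV[R]_(r + m)), lam_eval L (col A Wb) b c = 0) ->
  second_order g X pi Z ->
  bijective (IdPiXi (Pinh X C pi) (Xi L Z)).
Proof.
move=> *.
apply: (bijective_addr_square_zero usubmx) => [v v' /Xi_flat_qpart -> //|v].
exact/qpart_Pi_sharp_semibasic/Xi_flat_vertical.
Qed.
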